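(* Let $\mathcal R$ be either the category of topological rings with continuous ring homomorphisms, or its full subcategory of f-adic rings. Let $\varphi:R\to A$ and $\psi:R\to B$ be arrows of $\mathcal R$. If $(T,f,g)$ is a tensor product of $(\varphi,\psi)$ in $\mathcal R$, then the induced ring homomorphism $A\otimes_R B\to T$ from the ring-theoretic tensor product is bijective.
   Context: All rings are commutative with unity. For arrows $\varphi:R\to A$, $\psi:R\to B$ in a category $\mathcal R$, a tensor product (pushout) is a triple $(T,f,g)$ with $T$ an object and arrows $f:A\to T$, $g:B\to T$ with $f\circ\varphi=g\circ\psi$, such that for any object $C$ and arrows $f':A\to C$, $g':B\to C$ with $f'\circ\varphi=g'\circ\psi$ there is a unique arrow $\theta:T\to C$ with $f'=\theta\circ f$, $g'=\theta\circ g$. An f-adic ring is a topological ring with an open subring $A_0$ and finitely generated ideal $I_0\subset A_0$ such that $\{I_0^n\}$ is a fundamental system of neighbourhoods of $0$. *)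

From HB Require Import structures.
From mathcomp Require Import all_boot all_order all_algebra.
Set Implicit Arguments. Unset Strict Implicit. Unset Printing Implicit Defensive.
Import Order.TTheory GRing.Theory Num.Theory.
Local Open Scope ring_scope.

(* Open sets are predicates on the carrier.  The zero ring is allowed.  *)
(* Continuity of the binary operations is w.r.t. the product topology,  *)
(* written pointwise with basic product neighbourhoods V x W.           *)
Record TopRing := {
  tr_car :> comPzRingType;
  tr_open : (tr_car -> Prop) -> Prop;
  tr_open_full : tr_open (fun _ => True);
  tr_open_union : forall F : (tr_car -> Prop) -> Prop,
      (forall U, F U -> tr_open U) -> tr_open (fun x => exists U, F U /\ U x);
  tr_open_inter : forall U V, tr_open U -> tr_open V ->
      tr_open (fun x => U x /\ V x);
  tr_add_cont : forall (x y : tr_car) U, tr_open U -> U (x + y) ->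
      exists V W, [/\ tr_open V, tr_open W, V x, W y &
                   forall v w, V v -> W w -> U (v + w)];
  tr_opp_cont : forall (x : tr_car) U, tr_open U -> U (- x) ->
      exists V, [/\ tr_open V, V x & forall v, V v -> U (- v)];
  tr_mul_cont : forall (x y : tr_car) U, tr_open U -> U (x * y) ->
      exists V W, [/\ tr_open V, tr_open W, V x, W y &
                   forall v w, V v -> W w -> U (v * w)]
}.

Definition is_ringhom (X Y : comPzRingType) (h : X -> Y) : Prop :=
  [/\ h 1 = 1, forall x y, h (x + y) = h x + h y & forall x y, h (x * y) = h x * h y].

Definition is_continuous (X Y : TopRing) (h : X -> Y) : Prop :=
  forall U, tr_open U -> tr_open (fun x => U (h x)).

Definition is_arrow (X Y : TopRing) (h : X -> Y) : Prop :=
  is_ringhom h /\ is_continuous h.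

Definition is_subring (X : comPzRingType) (S : X -> Prop) : Prop :=
  [/\ S 1, forall x y, S x -> S y -> S (x - y) & forall x y, S x -> S y -> S (x * y)].

(* n-th power I0^n of the ideal I0 of A0 generated by the finite list s:
   the A0-linear combinations of products of n elements of s
   (for n = 0 this is A0 itself). *)
Definition monomial (X : comPzRingType) (s : seq X) (n : nat) (m : X) : Prop :=
  exists t : seq X, [/\ size t = n, forall y, y \in t -> y \in s &
                        m = \prod_(y <- t) y].

Definition ideal_pow (X : comPzRingType) (A0 : X -> Prop) (s : seq X) (n : nat)
  (x : X) : Prop :=
  exists l : seq (X * X),
    (forall p, p \in l -> A0 p.1 /\ monomial s n p.2) /\
    x = \sum_(p <- l) p.1 * p.2.

Definition is_fadic (X : TopRing) : Prop :=
  exists (A0 : X -> Prop) (s : seq X),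
    [/\ is_subring A0, tr_open A0, (forall y, y \in s -> A0 y),
        (forall n, exists U, [/\ tr_open U, U 0 & forall x, U x -> ideal_pow A0 s n x])
      &
        (forall U, tr_open U -> U 0 ->
           exists n, forall x, ideal_pow A0 s n x -> U x)].

Definition inCat (fadic_only : bool) (X : TopRing) : Prop :=
  if fadic_only then is_fadic X else True.

Definition is_pushout (fadic_only : bool) (R A B : TopRing)
  (phi : R -> A) (psi : R -> B) (T : TopRing) (f : A -> T) (g : B -> T) : Prop :=
  [/\ inCat fadic_only T, is_arrow f, is_arrow g,
      (forall r, f (phi r) = g (psi r)) &
      forall (C : TopRing) (f' : A -> C) (g' : B -> C),
        inCat fadic_only C -> is_arrow f' -> is_arrow g' ->
        (forall r, f' (phi r) = g' (psi r)) ->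
        (exists theta : T -> C, [/\ is_arrow theta,
            (forall a, f' a = theta (f a)) & (forall b, g' b = theta (g b))]) /\
        (forall theta1 theta2 : T -> C,
            is_arrow theta1 -> (forall a, f' a = theta1 (f a)) -> (forall b, g' b = theta1 (g b)) ->
            is_arrow theta2 -> (forall a, f' a = theta2 (f a)) -> (forall b, g' b = theta2 (g b)) ->
            forall t, theta1 t = theta2 t)].

(* The ring-theoretic tensor product A (x)_R B, as an abelian group     *)
(* (its underlying set): the free abelian group Z[A x B] modulo the     *)
(* subgroup generated by the bilinearity and R-balancedness relations.  *)
(* Elements of Z[A x B] are represented by formal sums                  *)
(* [:: (n_i, a_i, b_i)] = sum n_i (a_i, b_i).                           *)
Definition fsum (A B : comPzRingType) := seq (int * A * B).

Definition fcoef (A B : comPzRingType) (l : fsum A B) (a : A) (b : B) : int :=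
  \sum_(p <- l | (p.1.2 == a) && (p.2 == b)) p.1.1.

Definition fscale (A B : comPzRingType) (n : int) (l : fsum A B) : fsum A B :=
  [seq (n * p.1.1, p.1.2, p.2) | p <- l].

Definition is_tensor_rel (R A B : comPzRingType) (phi : R -> A) (psi : R -> B)
  (l : fsum A B) : Prop :=
  (exists a a' b, l = [:: (1, a + a', b); (-1, a, b); (-1, a', b)]) \/
  (exists a b b', l = [:: (1, a, b + b'); (-1, a, b); (-1, a, b')]) \/
  (exists r a b, l = [:: (1, phi r * a, b); (-1, a, psi r * b)]).

(* l1 and l2 represent the same element of A (x)_R B. *)
Definition tensor_eqv (R A B : comPzRingType) (phi : R -> A) (psi : R -> B)
  (l1 l2 : fsum A B) : Prop :=
  exists rs : seq (int * fsum A B),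
    (forall p, p \in rs -> is_tensor_rel phi psi p.2) /\
    forall a b, fcoef l1 a b - fcoef l2 a b =
                fcoef (flatten [seq fscale p.1 p.2 | p <- rs]) a b.

Definition tensor_induced (A B T : comPzRingType) (f : A -> T) (g : B -> T)
  (l : fsum A B) : T :=
  \sum_(p <- l) (f p.1.2 * g p.2) *~ p.1.1.

Definition tensor_induced_bijective (R A B T : comPzRingType)
  (phi : R -> A) (psi : R -> B) (f : A -> T) (g : B -> T) : Prop :=
  (forall t : T, exists l, tensor_induced f g l = t) /\
  (forall l1 l2, tensor_induced f g l1 = tensor_induced f g l2 ->
                 tensor_eqv phi psi l1 l2).

(* Give the algebraic tensor product A (x)_R B the indiscrete topology.  Every
   map into an indiscrete ring is continuous and every indiscrete ring is f-adic
   (take A0 the whole ring and I0 = (1)), so A (x)_R B is an object of either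
   category and a -> a (x) 1, b -> 1 (x) b are arrows into it.  The universal
   property of T yields a ring map theta : T -> A (x)_R B with
   theta (f a * g b) = a (x) b, so theta is a left inverse of the induced map
   Psi : A (x)_R B -> T, which is thus injective.  Conversely Psi o theta and id
   are two arrows from T to T retopologised indiscretely, both compatible with
   f and g, so uniqueness forces Psi o theta = id. *)

From HB Require Import structures.
From mathcomp Require Import all_boot all_order all_algebra.
From mathcomp Require Import boolp.
From mathcomp.algebra_tactics Require Import ring.
Set Implicit Arguments. Unset Strict Implicit. Unset Printing Implicit Defensive.
Import Order.TTheory GRing.Theory Num.Theory.
Local Open Scope ring_scope.

Section FormalSums.
Variables A B : comPzRingType.
Local Notation fs := (fsum A B).

Definition flin (Z : zmodType) (h : A -> B -> Z) (l : fs) : Z :=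
  \sum_(p <- l) h p.1.2 p.2 *~ p.1.1.

Section Flin.
Variables (Z : zmodType) (h : A -> B -> Z).

Lemma eq_flin (h' : A -> B -> Z) l : (forall x y, h x y = h' x y) -> flin h l = flin h' l.
Proof. by move=> e; apply: eq_bigr => p _; rewrite e. Qed.

Lemma flin_nil : flin h [::] = 0.
Proof. exact: big_nil. Qed.

Lemma flin_cons p l : flin h (p :: l) = h p.1.2 p.2 *~ p.1.1 + flin h l.
Proof. exact: big_cons. Qed.

Lemma flin_seq1 n a b : flin h [:: (n, a, b)] = h a b *~ n.
Proof. exact: big_seq1. Qed.

Lemma flin_cat l m : flin h (l ++ m) = flin h l + flin h m.
Proof. exact: big_cat. Qed.

Lemma flin_scale n l : flin h (fscale n l) = flin h l *~ n.
Proof.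
rewrite /flin /fscale big_map mulrz_suml; apply: eq_bigr => p _ /=.
by rewrite mulrC mulrzA.
Qed.

Lemma flin_flatten (L : seq fs) : flin h (flatten L) = \sum_(l <- L) flin h l.
Proof. by elim: L => [|l L IH]; rewrite ?big_nil ?flin_nil //= flin_cat IH big_cons. Qed.

End Flin.

Definition fkey (p : int * A * B) : A * B := (p.1.2, p.2).

Definition fdelta (a : A) (b : B) (x : A) (y : B) : int := ((x == a) && (y == b))%:R.

Lemma fcoef_flin l a b : fcoef l a b = flin (fdelta a b) l.
Proof.
rewrite /fcoef /flin big_mkcond; apply: eq_bigr => p _ /=.
by rewrite /fdelta; case: ifP; rewrite ?intz ?mul0rz.
Qed.

Lemma flin_fcoef (Z : zmodType) (h : A -> B -> Z) l (S : seq (A * B)) :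
  uniq S -> {subset map fkey l <= S} ->
  flin h l = \sum_(x <- S) h x.1 x.2 *~ fcoef l x.1 x.2.
Proof.
move=> uS sub.
have -> : \sum_(x <- S) h x.1 x.2 *~ fcoef l x.1 x.2 =
   \sum_(x <- S) \sum_(p <- l) (if fkey p == x then h x.1 x.2 *~ p.1.1 else 0).
  apply: eq_bigr => x _; rewrite mulrz_sumr big_mkcond.
  apply: eq_bigr => p _ /=; rewrite [x]surjective_pairing xpair_eqE.
  by case: ifP.
rewrite exchange_big /flin; apply: eq_big_seq => p pl.
have pS : fkey p \in S by apply: sub; apply: map_f.
rewrite (bigD1_seq (fkey p) pS uS) /= eqxx big1 ?addr0 //.
by move=> x; rewrite eq_sym => /negbTE ->.
Qed.

Definition fcoef_eq (l m : fs) := forall a b, fcoef l a b = fcoef m a b.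

Lemma flin_fcoef_eq (Z : zmodType) (h : A -> B -> Z) l m :
  fcoef_eq l m -> flin h l = flin h m.
Proof.
move=> e; set S := undup (map fkey (l ++ m)).
have sub k : {subset map fkey k <= S} -> flin h k = \sum_(x <- S) h x.1 x.2 *~ fcoef k x.1 x.2.
  exact: flin_fcoef (undup_uniq _).
rewrite !sub; first by apply: eq_bigr => x _; rewrite e.
- by move=> x xm; rewrite mem_undup map_cat mem_cat xm orbT.
- by move=> x xl; rewrite mem_undup map_cat mem_cat xl.
Qed.

Lemma fcoef_eq_flin l m : (forall h : A -> B -> int, flin h l = flin h m) -> fcoef_eq l m.
Proof. by move=> e a b; rewrite !fcoef_flin e. Qed.

Definition fmul_term (p q : int * A * B) : int * A * B :=
  (p.1.1 * q.1.1, p.1.2 * q.1.2, p.2 * q.2).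

Definition fmul (l m : fs) : fs := flatten [seq [seq fmul_term p q | q <- m] | p <- l].

Lemma flin_fmul (Z : zmodType) (h : A -> B -> Z) l m :
  flin h (fmul l m) = \sum_(p <- l) \sum_(q <- m)
     h (p.1.2 * q.1.2) (p.2 * q.2) *~ (p.1.1 * q.1.1).
Proof. by rewrite flin_flatten big_map; apply: eq_bigr => p _; rewrite /flin big_map. Qed.

Lemma flin_fmull (Z : zmodType) (h : A -> B -> Z) l m :
  flin h (fmul l m) = flin (fun x y => \sum_(q <- m) h (x * q.1.2) (y * q.2) *~ q.1.1) l.
Proof.
rewrite flin_fmul /flin; apply: eq_bigr => p _; rewrite mulrz_suml.
by apply: eq_bigr => q _; rewrite [p.1.1 * _]mulrC mulrzA.
Qed.

Lemma fmul_catl l l' m : fmul (l ++ l') m = fmul l m ++ fmul l' m.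
Proof. by rewrite /fmul map_cat flatten_cat. Qed.

Lemma fmulC l m : fcoef_eq (fmul l m) (fmul m l).
Proof.
apply: fcoef_eq_flin => h; rewrite !flin_fmul exchange_big; apply: eq_bigr => q _.
by apply: eq_bigr => p _; rewrite [q.1.2 * _]mulrC [q.2 * _]mulrC [q.1.1 * _]mulrC.
Qed.

Lemma fmulA l m k : fcoef_eq (fmul (fmul l m) k) (fmul l (fmul m k)).
Proof.
apply: fcoef_eq_flin => h; rewrite !flin_fmull; apply: eq_flin => x y.
have := flin_fmull (fun u v => h (x * u) (y * v)) m k; rewrite /flin /= => ->.
apply: eq_bigr => q _; congr (_ *~ _); apply: eq_bigr => r _.
by rewrite !mulrA.
Qed.

End FormalSums.

Section TensorEquivalence.
Variables (R A B : comPzRingType) (phi : R -> A) (psi : R -> B).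
Local Notation fs := (fsum A B).
Local Notation eqv := (tensor_eqv phi psi).

Definition rel_sum (rs : seq (int * fs)) : fs := flatten [seq fscale p.1 p.2 | p <- rs].

Definition tensor_rels (rs : seq (int * fs)) :=
  forall p, p \in rs -> is_tensor_rel phi psi p.2.

Lemma flin_rel_sum (Z : zmodType) (h : A -> B -> Z) rs :
  flin h (rel_sum rs) = \sum_(p <- rs) flin h p.2 *~ p.1.
Proof. by rewrite flin_flatten big_map; apply: eq_bigr => p _; rewrite flin_scale. Qed.

Lemma rel_sum_cat r1 r2 : rel_sum (r1 ++ r2) = rel_sum r1 ++ rel_sum r2.
Proof. by rewrite /rel_sum map_cat flatten_cat. Qed.

Lemma tensor_rels_cat r1 r2 : tensor_rels r1 -> tensor_rels r2 -> tensor_rels (r1 ++ r2).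
Proof. by move=> g1 g2 p; rewrite mem_cat => /orP[]; [apply: g1 | apply: g2]. Qed.

Lemma tensor_eqvP l1 l2 :
  eqv l1 l2 <-> exists2 rs, tensor_rels rs & fcoef_eq l1 (l2 ++ rel_sum rs).
Proof.
split=> [[rs [rsR e]] | [rs rsR e]].
- exists rs => // a b; move: (e a b).
  by rewrite !fcoef_flin flin_cat => <-; rewrite addrC subrK.
- by exists rs; split => // a b; rewrite e !fcoef_flin flin_cat addrC addKr.
Qed.

Lemma fcoef_eq_tensor_eqv l1 l2 : fcoef_eq l1 l2 -> eqv l1 l2.
Proof. by move=> e; apply/tensor_eqvP; exists [::] => // a b; rewrite cats0. Qed.

Lemma tensor_eqv_refl l : eqv l l.
Proof. exact: fcoef_eq_tensor_eqv. Qed.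

Lemma tensor_eqv_sym l1 l2 : eqv l1 l2 -> eqv l2 l1.
Proof.
case/tensor_eqvP => rs rsR e; apply/tensor_eqvP.
exists [seq (- p.1, p.2) | p <- rs]; first by move=> p /mapP[q /rsR ? ->].
apply: fcoef_eq_flin => h; rewrite flin_cat (flin_fcoef_eq h e) flin_cat.
rewrite !flin_rel_sum big_map /=.
under [X in _ = _ + X]eq_bigr do rewrite mulrNz.
by rewrite sumrN addrK.
Qed.

Lemma tensor_eqv_trans l1 l2 l3 : eqv l1 l2 -> eqv l2 l3 -> eqv l1 l3.
Proof.
case/tensor_eqvP => r1 r1R e1 /tensor_eqvP[r2 r2R e2]; apply/tensor_eqvP.
exists (r2 ++ r1); first exact: tensor_rels_cat.
apply: fcoef_eq_flin => h.
by rewrite (flin_fcoef_eq h e1) flin_cat (flin_fcoef_eq h e2) rel_sum_cat !flin_cat addrA.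
Qed.

Lemma tensor_eqv_cat l l' m m' : eqv l l' -> eqv m m' -> eqv (l ++ m) (l' ++ m').
Proof.
case/tensor_eqvP => r1 r1R e1 /tensor_eqvP[r2 r2R e2]; apply/tensor_eqvP.
exists (r1 ++ r2); first exact: tensor_rels_cat.
apply: fcoef_eq_flin => h.
by rewrite flin_cat (flin_fcoef_eq h e1) (flin_fcoef_eq h e2) rel_sum_cat !flin_cat addrACA.
Qed.

Lemma tensor_eqv_scale n l l' : eqv l l' -> eqv (fscale n l) (fscale n l').
Proof.
case/tensor_eqvP => rs rsR e; apply/tensor_eqvP.
exists [seq (p.1 * n, p.2) | p <- rs]; first by move=> p /mapP[q /rsR ? ->].
apply: fcoef_eq_flin => h.
rewrite flin_scale (flin_fcoef_eq h e) !flin_cat flin_scale !flin_rel_sum big_map /=.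
rewrite mulrzDl; congr (_ + _); rewrite mulrz_suml; apply: eq_bigr => p _.
by rewrite mulrzA.
Qed.

Definition rel_mulr (r : fs) (q : int * A * B) : fs :=
  [seq (u.1.1, u.1.2 * q.1.2, u.2 * q.2) | u <- r].

Lemma tensor_rel_mulr r q : is_tensor_rel phi psi r -> is_tensor_rel phi psi (rel_mulr r q).
Proof.
case=> [[a [a' [b ->]]] | [[a [b [b' ->]]] | [r0 [a [b ->]]]]].
- by left; exists (a * q.1.2), (a' * q.1.2), (b * q.2); rewrite /rel_mulr /= mulrDl.
- by right; left; exists (a * q.1.2), (b * q.2), (b' * q.2); rewrite /rel_mulr /= mulrDl.
- by right; right; exists r0, (a * q.1.2), (b * q.2); rewrite /rel_mulr /= !mulrA.
Qed.

(* Multiplying a relation by a pure tensor term by term gives a relation again. *)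
Lemma tensor_eqv_fmull l l' m : eqv l l' -> eqv (fmul l m) (fmul l' m).
Proof.
case/tensor_eqvP => rs rsR e; apply/tensor_eqvP.
exists (flatten [seq [seq (p.1 * q.1.1, rel_mulr p.2 q) | q <- m] | p <- rs]).
  move=> x /flattenP[s /mapP[p pin ->] /mapP[q qin ->]] /=.
  exact/tensor_rel_mulr/rsR.
apply: fcoef_eq_flin => h.
rewrite flin_fmull (flin_fcoef_eq _ e) -flin_fmull fmul_catl !flin_cat; congr (_ + _).
rewrite flin_fmull !flin_rel_sum /rel_sum big_flatten /= big_map; apply: eq_bigr => p _.
rewrite big_map /=.
under [RHS]eq_bigr do rewrite /flin big_map mulrz_suml.
rewrite exchange_big /flin mulrz_suml; apply: eq_bigr => u _ /=.
rewrite !mulrz_suml; apply: eq_bigr => q _ /=.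
by rewrite -!mulrzA; congr (_ *~ _); ring.
Qed.

Lemma tensor_eqv_fmul l l' m m' : eqv l l' -> eqv m m' -> eqv (fmul l m) (fmul l' m').
Proof.
move=> e1 e2; apply: (tensor_eqv_trans (tensor_eqv_fmull m e1)).
apply: (tensor_eqv_trans (fcoef_eq_tensor_eqv (fmulC _ _))).
apply: (tensor_eqv_trans (tensor_eqv_fmull l' e2)).
exact: fcoef_eq_tensor_eqv (fmulC _ _).
Qed.

End TensorEquivalence.

Section TensorRing.
Variables (R A B : comPzRingType) (phi : R -> A) (psi : R -> B).
Local Notation fs := (fsum A B).
Local Notation eqv := (tensor_eqv phi psi).
Local Open Scope quotient_scope.

Definition tensor_eqvb (l m : fs) : bool := `[< eqv l m >].

Lemma tensor_eqvb_refl : reflexive tensor_eqvb.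
Proof. by move=> l; apply/asboolP; apply: tensor_eqv_refl. Qed.

Lemma tensor_eqvb_sym : symmetric tensor_eqvb.
Proof. by move=> l m; apply/asboolP/asboolP; apply: tensor_eqv_sym. Qed.

Lemma tensor_eqvb_trans : transitive tensor_eqvb.
Proof. by move=> m l k /asboolP e1 /asboolP e2; apply/asboolP; apply: tensor_eqv_trans e2. Qed.

Definition tensor_equiv_rel :=
  EquivRel tensor_eqvb tensor_eqvb_refl tensor_eqvb_sym tensor_eqvb_trans.

Definition tensor := {eq_quot tensor_equiv_rel}.
HB.instance Definition _ := Choice.on tensor.
HB.instance Definition _ := Quotient.on tensor.

Lemma tensor_piP (l m : fs) : \pi_tensor l = \pi_tensor m <-> eqv l m.
Proof. by split=> [/eqquotP/asboolP | e]; last by apply/eqquotP; apply/asboolP. Qed.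

Lemma tensor_repr_pi (l : fs) : eqv (repr (\pi_tensor l)) l.
Proof. by apply/tensor_piP; rewrite reprK. Qed.

Lemma tensor_pi_fcoef_eq (l m : fs) : fcoef_eq l m -> \pi_tensor l = \pi_tensor m.
Proof. by move=> e; apply/tensor_piP; apply: fcoef_eq_tensor_eqv. Qed.

Definition tensor_zero : tensor := \pi_tensor [::].
Definition tensor_add (x y : tensor) : tensor := \pi_tensor (repr x ++ repr y).
Definition tensor_opp (x : tensor) : tensor := \pi_tensor (fscale (-1) (repr x)).
Definition tensor_one : tensor := \pi_tensor [:: (1, 1, 1)].
Definition tensor_mul (x y : tensor) : tensor := \pi_tensor (fmul (repr x) (repr y)).

Lemma tensor_add_pi l m : tensor_add (\pi_tensor l) (\pi_tensor m) = \pi_tensor (l ++ m).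
Proof. by apply/tensor_piP; apply: tensor_eqv_cat; apply: tensor_repr_pi. Qed.

Lemma tensor_opp_pi l : tensor_opp (\pi_tensor l) = \pi_tensor (fscale (-1) l).
Proof. by apply/tensor_piP; apply: tensor_eqv_scale; apply: tensor_repr_pi. Qed.

Lemma tensor_mul_pi l m : tensor_mul (\pi_tensor l) (\pi_tensor m) = \pi_tensor (fmul l m).
Proof. by apply/tensor_piP; apply: tensor_eqv_fmul; apply: tensor_repr_pi. Qed.

Lemma tensor_addA : associative tensor_add.
Proof.
move=> x y z; elim/quotW: x => x; elim/quotW: y => y; elim/quotW: z => z.
by rewrite (tensor_add_pi y) (tensor_add_pi x y) !tensor_add_pi catA.
Qed.

Lemma tensor_addC : commutative tensor_add.
Proof.
move=> x y; elim/quotW: x => x; elim/quotW: y => y; rewrite !tensor_add_pi.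
by apply: tensor_pi_fcoef_eq; apply: fcoef_eq_flin => h; rewrite !flin_cat addrC.
Qed.

Lemma tensor_add0 : left_id tensor_zero tensor_add.
Proof. by move=> x; elim/quotW: x => x; rewrite tensor_add_pi. Qed.

Lemma tensor_addN : left_inverse tensor_zero tensor_opp tensor_add.
Proof.
move=> x; elim/quotW: x => x; rewrite tensor_opp_pi tensor_add_pi.
apply: tensor_pi_fcoef_eq; apply: fcoef_eq_flin => h.
by rewrite flin_cat flin_scale mulrN1z addNr flin_nil.
Qed.

HB.instance Definition _ :=
  GRing.isZmodule.Build tensor tensor_addA tensor_addC tensor_add0 tensor_addN.

Lemma tensor_mulA : associative tensor_mul.
Proof.
move=> x y z; elim/quotW: x => x; elim/quotW: y => y; elim/quotW: z => z.
rewrite (tensor_mul_pi y) (tensor_mul_pi x y) !tensor_mul_pi.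
by apply/esym/tensor_pi_fcoef_eq/fmulA.
Qed.

Lemma tensor_mulC : commutative tensor_mul.
Proof.
move=> x y; elim/quotW: x => x; elim/quotW: y => y.
by rewrite !tensor_mul_pi; apply/tensor_pi_fcoef_eq/fmulC.
Qed.

Lemma tensor_mul1 : left_id tensor_one tensor_mul.
Proof.
move=> x; elim/quotW: x => x; rewrite tensor_mul_pi; apply: tensor_pi_fcoef_eq.
apply: fcoef_eq_flin => h; rewrite flin_fmul big_seq1.
by apply: eq_bigr => q _; rewrite !mul1r.
Qed.

Lemma tensor_mulDl : left_distributive tensor_mul tensor_add.
Proof.
move=> x y z; elim/quotW: x => x; elim/quotW: y => y; elim/quotW: z => z.
by rewrite (tensor_add_pi x) (tensor_mul_pi x) (tensor_mul_pi y) !tensor_mul_pi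
  tensor_add_pi fmul_catl.
Qed.

HB.instance Definition _ :=
  GRing.Zmodule_isComPzRing.Build tensor tensor_mulA tensor_mulC tensor_mul1 tensor_mulDl.

End TensorRing.

Section TensorEmbeddings.
Variables (R A B : comPzRingType) (phi : R -> A) (psi : R -> B).
Local Notation fs := (fsum A B).
Local Open Scope quotient_scope.
Local Notation pi := (\pi_(tensor phi psi)).

Lemma tensor_pi_cat (l m : fs) : pi (l ++ m) = pi l + pi m.
Proof. by rewrite -tensor_add_pi. Qed.

Lemma tensor_pi_scale (n : int) (l : fs) : pi (fscale n l) = pi l *~ n.
Proof.
have scale_nat k : pi (fscale k%:Z l) = pi l *+ k.
  elim: k => [|k IH].
    by apply: tensor_pi_fcoef_eq; apply: fcoef_eq_flin => h; rewrite flin_scale flin_nil.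
  rewrite mulrS -IH -tensor_pi_cat; apply: tensor_pi_fcoef_eq; apply: fcoef_eq_flin => h.
  by rewrite flin_cat !flin_scale -!pmulrn mulrS.
case: n => k; first exact: scale_nat.
rewrite NegzE mulrNz -[pi l *~ _]/(pi l *+ k.+1) -scale_nat -[- pi _]/(tensor_opp _).
rewrite tensor_opp_pi; apply: tensor_pi_fcoef_eq; apply: fcoef_eq_flin => h.
by rewrite !flin_scale -mulrzA mulrN1.
Qed.

Lemma tensor_pi_flin (l : fs) : pi l = flin (fun a b => pi [:: (1, a, b)]) l.
Proof.
elim: l => [|p l IH]; first by rewrite flin_nil.
rewrite flin_cons -IH -tensor_pi_scale -tensor_pi_cat.
by apply: tensor_pi_fcoef_eq; apply: fcoef_eq_flin => h; rewrite /= !flin_cons /= mulr1.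
Qed.

Lemma tensor_pi_rel (l1 l2 r : fs) : is_tensor_rel phi psi r ->
  (forall h : A -> B -> int, flin h l1 = flin h l2 + flin h r) -> pi l1 = pi l2.
Proof.
move=> rR e; apply/tensor_piP/tensor_eqvP; exists [:: (1, r)].
  by move=> p; rewrite inE => /eqP ->.
by apply: fcoef_eq_flin => h; rewrite flin_cat flin_rel_sum big_seq1 mulr1z.
Qed.

Definition tensor_left (a : A) : tensor phi psi := pi [:: (1, a, 1)].
Definition tensor_right (b : B) : tensor phi psi := pi [:: (1, 1, b)].

Lemma tensor_left_right a b : tensor_left a * tensor_right b = pi [:: (1, a, b)].
Proof.
rewrite -[_ * _]/(tensor_mul _ _) tensor_mul_pi; apply: tensor_pi_fcoef_eq.
by apply: fcoef_eq_flin => h; rewrite flin_fmul !big_seq1 /flin !big_seq1 /= mulr1 mul1r mulr1.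
Qed.

Lemma tensor_left_ringhom : is_ringhom tensor_left.
Proof.
split=> // [x y|x y].
- rewrite -tensor_pi_cat.
  apply: (@tensor_pi_rel _ _ [:: (1, x + y, 1); (-1, x, 1); (-1, y, 1)]).
    by left; exists x, y, 1.
  by move=> h; rewrite /flin !big_cons !big_nil /= !mulrzz; ring.
- rewrite -[pi _ * pi _]/(tensor_mul _ _) tensor_mul_pi; apply: tensor_pi_fcoef_eq.
  by apply: fcoef_eq_flin => h; rewrite flin_fmul !big_seq1 /flin !big_seq1 /= !mulr1.
Qed.

Lemma tensor_right_ringhom : is_ringhom tensor_right.
Proof.
split=> // [x y|x y].
- rewrite -tensor_pi_cat.
  apply: (@tensor_pi_rel _ _ [:: (1, 1, x + y); (-1, 1, x); (-1, 1, y)]).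
    by right; left; exists 1, x, y.
  by move=> h; rewrite /flin !big_cons !big_nil /= !mulrzz; ring.
- rewrite -[pi _ * pi _]/(tensor_mul _ _) tensor_mul_pi; apply: tensor_pi_fcoef_eq.
  by apply: fcoef_eq_flin => h; rewrite flin_fmul !big_seq1 /flin !big_seq1 /= !mulr1.
Qed.

Lemma tensor_balanced r : tensor_left (phi r) = tensor_right (psi r).
Proof.
apply: (@tensor_pi_rel _ _ [:: (1, phi r * 1, 1); (-1, 1, psi r * 1)]).
  by right; right; exists r, 1, 1.
by move=> h; rewrite /flin !big_cons !big_nil /= !mulr1 !mulrzz; ring.
Qed.

End TensorEmbeddings.

Section Indiscrete.
Variable X : comPzRingType.

Definition indiscrete_open (U : X -> Prop) := (forall x, U x) \/ (forall x, ~ U x).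

Lemma indiscrete_open_full U z : indiscrete_open U -> U z -> forall x, U x.
Proof. by case=> // HU /HU. Qed.

Lemma indiscrete_openT : indiscrete_open (fun _ => True).
Proof. by left. Qed.

Lemma indiscrete_open_union (F : (X -> Prop) -> Prop) :
  (forall U, F U -> indiscrete_open U) ->
  indiscrete_open (fun x => exists U, F U /\ U x).
Proof.
move=> oF; have [[U [FU HU]]|N] := pselect (exists U, F U /\ forall x, U x).
  by left=> x; exists U.
right=> x [U [FU Ux]]; case: (oF U FU) => [HU|HU]; last exact: HU Ux.
by apply: N; exists U.
Qed.

Lemma indiscrete_openI U V :
  indiscrete_open U -> indiscrete_open V -> indiscrete_open (fun x => U x /\ V x).
Proof.
case=> HU; last by right=> x [/HU].
by case=> HV; [left | right=> x [_ /HV]].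
Qed.

Lemma indiscrete_cont2 (op : X -> X -> X) (x y : X) U :
  indiscrete_open U -> U (op x y) ->
  exists V W, [/\ indiscrete_open V, indiscrete_open W, V x, W y &
                  forall v w, V v -> W w -> U (op v w)].
Proof.
move=> oU Uxy; exists (fun _ => True), (fun _ => True).
split=> //; try by left.
by move=> v w _ _; exact: indiscrete_open_full oU Uxy _.
Qed.

Lemma indiscrete_cont1 (op : X -> X) (x : X) U :
  indiscrete_open U -> U (op x) ->
  exists V, [/\ indiscrete_open V, V x & forall v, V v -> U (op v)].
Proof.
move=> oU Ux; exists (fun _ => True).
split=> //; first by left.
by move=> v _; exact: indiscrete_open_full oU Ux _.
Qed.

Definition indiscrete : TopRing :=
  {| tr_car := X; tr_open := indiscrete_open; tr_open_full := indiscrete_openT;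
     tr_open_union := indiscrete_open_union; tr_open_inter := indiscrete_openI;
     tr_add_cont := @indiscrete_cont2 +%R; tr_opp_cont := @indiscrete_cont1 -%R;
     tr_mul_cont := @indiscrete_cont2 *%R |}.

Lemma indiscrete_continuous (Y : TopRing) (h : Y -> indiscrete) : is_continuous h.
Proof.
move=> U [HU|HU].
  have -> : (fun x => U (h x)) = (fun _ => True) by apply/funext => x; apply/propext.
  exact: tr_open_full.
have -> : (fun x => U (h x)) = (fun x => exists V, (fun _ : Y -> Prop => False) V /\ V x).
  by apply/funext => x; apply/propext; split=> [/HU | [? []]].
by apply: tr_open_union => ? [].
Qed.

Lemma indiscrete_arrow (Y : TopRing) (h : Y -> indiscrete) : is_ringhom h -> is_arrow h.
Proof. by split=> //; apply: indiscrete_continuous. Qed.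

Lemma indiscrete_fadic : is_fadic indiscrete.
Proof.
exists (fun _ => True), [:: 1]; split=> //; first by left.
- move=> n; exists (fun _ => True); split=> //; first by left.
  move=> x _; exists [:: (x, 1)]; split; last by rewrite big_seq1 mulr1.
  move=> p; rewrite inE => /eqP -> /=; split=> //.
  exists (nseq n 1); split; first by rewrite size_nseq.
    by move=> y; rewrite mem_nseq => /andP[_ /eqP ->]; rewrite inE.
  by rewrite big1_seq // => y /andP[_]; rewrite mem_nseq => /andP[_ /eqP ->].
- by move=> U oU U0; exists 0%N => x _; exact: indiscrete_open_full oU U0 _.
Qed.

Lemma indiscrete_inCat b : inCat b indiscrete.
Proof. by case: b => //=; apply: indiscrete_fadic. Qed.

End Indiscrete.

Section RingHom.
Variables (X Y : comPzRingType) (h : X -> Y).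
Hypothesis hR : is_ringhom h.

Lemma ringhom0 : h 0 = 0.
Proof. by case: hR => _ hD _; apply: (addrI (h 0)); rewrite -hD !addr0. Qed.

Lemma ringhomN x : h (- x) = - h x.
Proof. by case: hR => _ hD _; apply: (addrI (h x)); rewrite -hD !subrr ringhom0. Qed.

Lemma ringhomMn x k : h (x *+ k) = h x *+ k.
Proof.
case: hR => _ hD _; elim: k => [|k IH]; first by rewrite !mulr0n ringhom0.
by rewrite !mulrS hD IH.
Qed.

Lemma ringhomMz x n : h (x *~ n) = h x *~ n.
Proof.
case: n => k; first exact: ringhomMn.
by rewrite !NegzE !mulrNz ringhomN -[x *~ _]/(x *+ k.+1) ringhomMn.
Qed.

Lemma ringhom_flin (A B : comPzRingType) (u : A -> B -> X) l :
  h (flin u l) = flin (fun a b => h (u a b)) l.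
Proof.
case: hR => _ hD _; elim: l => [|p l IH]; first by rewrite !flin_nil ringhom0.
by rewrite !flin_cons hD ringhomMz IH.
Qed.

Lemma ringhom_comp (Z : comPzRingType) (k : Y -> Z) :
  is_ringhom k -> is_ringhom (k \o h).
Proof.
case: hR => h1 hD hM [k1 kD kM].
by split=> [|x y|x y] /=; rewrite ?h1 ?hD ?hM.
Qed.

End RingHom.

Section TensorLift.
Variables (R A B T : comPzRingType) (phi : R -> A) (psi : R -> B).
Variables (f : A -> T) (g : B -> T).
Hypotheses (fR : is_ringhom f) (gR : is_ringhom g).
Hypothesis fg_balanced : forall r, f (phi r) = g (psi r).
Local Open Scope quotient_scope.
Local Notation pi := (\pi_(tensor phi psi)).

Lemma tensor_inducedE l : tensor_induced f g l = flin (fun a b => f a * g b) l.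
Proof. by []. Qed.

Lemma tensor_induced_rel r : is_tensor_rel phi psi r -> tensor_induced f g r = 0.
Proof.
case: fR => _ fD fM; case: gR => _ gD gM.
case=> [[a [a' [b ->]]] | [[a [b [b' ->]]] | [r0 [a [b ->]]]]];
  rewrite /tensor_induced !big_cons big_nil /= !mulr1z !mulrN1z.
- by rewrite fD; ring.
- by rewrite gD; ring.
- by rewrite fM gM fg_balanced; ring.
Qed.

Lemma tensor_induced_eqv l m :
  tensor_eqv phi psi l m -> tensor_induced f g l = tensor_induced f g m.
Proof.
case/tensor_eqvP => rs rsR e; rewrite !tensor_inducedE (flin_fcoef_eq _ e) flin_cat.
rewrite flin_rel_sum big_seq big1 ?addr0 // => p /rsR pR.
by rewrite -tensor_inducedE tensor_induced_rel ?mul0rz.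
Qed.

Definition tensor_lift (x : tensor phi psi) : T := tensor_induced f g (repr x).

Lemma tensor_lift_pi l : tensor_lift (pi l) = tensor_induced f g l.
Proof. exact/tensor_induced_eqv/tensor_repr_pi. Qed.

Lemma tensor_lift_ringhom : is_ringhom tensor_lift.
Proof.
case: fR => f1 fD fM; case: gR => g1 gD gM; split.
- rewrite -[1]/(pi [:: (1, 1, 1)]) tensor_lift_pi.
  by rewrite tensor_inducedE flin_seq1 f1 g1 mulr1 mulr1z.
- move=> x y; elim/quotW: x => x; elim/quotW: y => y.
  rewrite -[pi x + pi y]/(tensor_add _ _) tensor_add_pi !tensor_lift_pi.
  by rewrite !tensor_inducedE flin_cat.
- move=> x y; elim/quotW: x => x; elim/quotW: y => y.
  rewrite -[pi x * pi y]/(tensor_mul _ _) tensor_mul_pi !tensor_lift_pi.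
  rewrite !tensor_inducedE flin_fmul /flin mulr_suml; apply: eq_bigr => p _.
  rewrite mulrzAl mulr_sumr mulrz_suml; apply: eq_bigr => q _.
  by rewrite mulrzAr fM gM -mulrzA [q.1.1 * _]mulrC; congr (_ *~ _); ring.
Qed.

Lemma tensor_lift_left a : tensor_lift (tensor_left phi psi a) = f a.
Proof.
case: gR => g1 _ _.
by rewrite tensor_lift_pi tensor_inducedE flin_seq1 g1 mulr1 mulr1z.
Qed.

Lemma tensor_lift_right b : tensor_lift (tensor_right phi psi b) = g b.
Proof.
case: fR => f1 _ _.
by rewrite tensor_lift_pi tensor_inducedE flin_seq1 f1 mul1r mulr1z.
Qed.

Lemma tensor_inducedK (theta : T -> tensor phi psi) : is_ringhom theta ->
  (forall a, tensor_left phi psi a = theta (f a)) ->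
  (forall b, tensor_right phi psi b = theta (g b)) ->
  forall l, theta (tensor_induced f g l) = pi l.
Proof.
move=> thetaR theta_f theta_g l; case: (thetaR) => _ _ thM.
rewrite tensor_inducedE (ringhom_flin thetaR) tensor_pi_flin.
by apply: eq_flin => a b; rewrite thM -theta_f -theta_g tensor_left_right.
Qed.

End TensorLift.

Section Pushout.
Variables (fadic_only : bool) (R A B T : TopRing) (phi : R -> A) (psi : R -> B).
Variables (f : A -> T) (g : B -> T).
Hypothesis pushoutT : is_pushout fadic_only phi psi f g.
Variable theta : T -> tensor phi psi.
Hypothesis thetaR : is_ringhom theta.
Hypothesis theta_f : forall a, tensor_left phi psi a = theta (f a).
Hypothesis theta_g : forall b, tensor_right phi psi b = theta (g b).

Lemma tensor_liftK t : tensor_lift f g (theta t) = t.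
Proof.
case: pushoutT => _ [fR _] [gR _] fg UP.
have [_ UPuniq] := UP (indiscrete T) f g (indiscrete_inCat _ _)
  (indiscrete_arrow fR) (indiscrete_arrow gR) fg.
apply: esym; apply: (UPuniq id (tensor_lift f g \o theta)) => // [||a|b].
- exact: indiscrete_arrow.
- exact/indiscrete_arrow/ringhom_comp/tensor_lift_ringhom.
- by rewrite /= -theta_f tensor_lift_left.
- by rewrite /= -theta_g tensor_lift_right.
Qed.

End Pushout.

Theorem mainTheorem11 (fadic_only : bool) (R A B : TopRing)
  (phi : R -> A) (psi : R -> B) (T : TopRing) (f : A -> T) (g : B -> T) :
  inCat fadic_only R -> inCat fadic_only A -> inCat fadic_only B ->
  is_arrow phi -> is_arrow psi ->
  is_pushout fadic_only phi psi f g ->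
  tensor_induced_bijective phi psi f g.
Proof.
move=> _ _ _ _ _ pushoutT; have [_ _ _ _ UP] := pushoutT.
have [[theta [[thetaR _] theta_f theta_g]] _] :=
  UP (indiscrete (tensor phi psi)) (tensor_left phi psi) (tensor_right phi psi)
     (indiscrete_inCat _ _) (indiscrete_arrow (tensor_left_ringhom phi psi))
     (indiscrete_arrow (tensor_right_ringhom phi psi)) (tensor_balanced phi psi).
split=> [t | l1 l2 e].
- by exists (repr (theta t)); apply: (tensor_liftK pushoutT thetaR theta_f theta_g).
- by apply/tensor_piP; rewrite -!(tensor_inducedK thetaR theta_f theta_g) e.
Qed.
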